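(* A compact space $K$ has the property that every zero-dimensional continuous image of $K$ is metrizable if and only if $K$ has at most countably many clopen subsets. *)

From HB Require Import structures.
From mathcomp Require Import all_boot all_order all_algebra.
From mathcomp Require Import all_classical all_reals topology.
From Stdlib Require Import Rdefinitions.

Set Implicit Arguments.
Unset Strict Implicit.
Unset Printing Implicit Defensive.

Local Open Scope classical_set_scope.

(* Zero-dimensional (paper's sense): the space has a base of clopen sets. *)
Definition clopen_base_space (T : topologicalType) : Prop :=
  forall (U : set T) (x : T), open U -> U x ->
    exists V : set T, clopen V /\ V x /\ V `<=` U.

Definition is_metric_for (T : topologicalType) (d : T -> T -> R) : Prop :=
  (forall x y, Rle 0 (d x y)) /\
  (forall x y, d x y = 0%R <-> x = y) /\
  (forall x y, d x y = d y x) /\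
  (forall x y z, Rle (d x z) (Rplus (d x y) (d y z))) /\
  (forall A : set T, open A <->
     (forall x, A x -> exists e : R, Rlt 0 e /\ [set y | Rlt (d x y) e] `<=` A)).

Definition metrizable_space (T : topologicalType) : Prop :=
  exists d : T -> T -> R, is_metric_for d.

(* If K has countably many clopen sets, so does every continuous image L of K,
   since the clopen sets of L pull back injectively.  Enumerating them as
   g_0, g_1, ..., a zero-dimensional Hausdorff L is metrized by the ultrametric
   d(x, y) = 2^-n, where n is the least index such that g_n separates x and y.
   Conversely, identify the points of K lying in the same clopen sets and
   topologize the quotient Q by the images of the clopen sets of K.  Then Q is a
   zero-dimensional Hausdorff image of K, and distinct clopen sets of K have
   distinct clopen images in Q.  If Q is metrizable, it is a compact metric
   space, hence second countable, hence it has only countably many clopen sets. *)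

From HB Require Import structures.
From mathcomp Require Import all_boot all_order all_algebra.
From mathcomp Require Import all_classical all_reals topology.
From mathcomp Require Import finmap.
From Stdlib Require Import Rbase Rfunctions Lra.

Set Implicit Arguments.
Unset Strict Implicit.
Unset Printing Implicit Defensive.

Local Open Scope classical_set_scope.
Local Open Scope R_scope.

Lemma inj_countable (S U : Type) (A : set S) (B : set U) (F : S -> U) :
  {in A &, injective F} -> (forall a, A a -> B (F a)) ->
  countable B -> countable A.
Proof.
move=> F_inj FAB /countable_injP[h h_inj].
apply/countable_injP; exists (h \o F).
move=> a1 a2 a1A a2A /h_inj; rewrite !in_setE.
by move=> /(_ (FAB _ (set_mem a1A)) (FAB _ (set_mem a2A))); exact: F_inj.
Qed.

Lemma preimage_surj_inj (S U : Type) (f : S -> U) :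
  (forall y, exists x, f x = y) -> injective (preimage f).
Proof.
move=> f_surj B1 B2 eqB; have f_range : range f = setT.
  by apply/seteqP; split=> // y _; have [x <-] := f_surj y; exists x.
by rewrite -(image_preimage B1 f_range) eqB image_preimage.
Qed.

Lemma compact_continuous_surj (S U : topologicalType) (f : S -> U) :
  continuous f -> (forall y, exists x, f x = y) ->
  compact [set: S] -> compact [set: U].
Proof.
move=> f_cont f_surj /(continuous_compact (continuous_subspaceT f_cont)).
suff -> : f @` setT = setT by [].
by apply/seteqP; split=> // y _; have [x <-] := f_surj y; exists x.
Qed.

Lemma zero_dimensional_hausdorff (T : topologicalType) :
  zero_dimensional T -> hausdorff_space T.
Proof.
move=> T_zero; rewrite open_hausdorff => x y.
move=> /T_zero[U [[U_open U_closed] Ux nUy]].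
exists (U, ~` U) => /=; first by rewrite !in_setE.
split=> //; first exact: closed_openC.
by apply/eqP; rewrite setICr.
Qed.

Lemma half_pow_gt0 n : 0 < (/2) ^ n.
Proof. by apply: pow_lt; lra. Qed.

Lemma half_pow_ltE m n : (/2) ^ n < (/2) ^ m <-> (m < n)%nat.
Proof.
have pow2_gt0 k : 0 < 2 ^ k by apply: pow_lt; lra.
rewrite !pow_inv; split=> [lt_nm|/ltP lt_mn]; last first.
  apply: Rinv_lt_contravar; first exact: Rmult_lt_0_compat.
  by apply: Rlt_pow => //; lra.
rewrite ltnNge; apply/negP => /leP le_nm.
have : 1 <= 2 by lra.
move=> /(Rle_pow 2 _ _)/(_ le_nm)/(Rinv_le_contravar _ _ (pow2_gt0 n)); lra.
Qed.

Lemma half_pow_lt e : 0 < e -> exists n, (/2) ^ n < e.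
Proof.
move=> e_gt0; have [|n lt_e] := pow_lt_1_zero (/2) _ e e_gt0.
  by rewrite Rabs_pos_eq; lra.
exists n; have := lt_e n (le_n n).
by rewrite Rabs_pos_eq //; apply/Rlt_le/half_pow_gt0.
Qed.

Lemma metric_ball_open (T : topologicalType) (d : T -> T -> R) x e :
  is_metric_for d -> open [set y | d x y < e].
Proof.
move=> [_ [_ [_ [d_tri d_open]]]]; apply/d_open => y /= dxy.
exists (e - d x y); split; first lra.
by move=> z /= dyz; have := d_tri x y z; lra.
Qed.

Section compact_metric.
Variables (T : ptopologicalType) (d : T -> T -> R).
Hypotheses (d_metric : is_metric_for d) (T_compact : compact [set: T]).

Lemma finite_net r : 0 < r ->
  exists N : set T, finite_set N /\ forall y, exists2 c, N c & d c y < r.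
Proof.
move=> r_gt0; have [_ [d_eq0 _]] := d_metric.
move: T_compact; rewrite compact_cover.
move=> /(_ T setT (fun c => [set y | d c y < r])).
case=> [c _|y _|N _ N_cover]; first exact: metric_ball_open.
- by exists y => //=; rewrite (proj2 (d_eq0 y y) erefl).
- exists [set` N]; split=> [|y]; first exact: finite_fset.
  by have [c] := N_cover y I; exists c.
Qed.

Lemma compact_metric_second_countable : @second_countable T.
Proof.
have [_ [_ [d_sym [d_tri d_open]]]] := d_metric.
have [net /all_and2[net_finite netP]] :=
  choice (fun n => finite_net (half_pow_gt0 n)).
pose ball n c := [set y | d c y < (/2) ^ n].
exists (\bigcup_n ball n @` net n).
  apply: bigcup_countable => [|n _]; first exact: countableP.
  exact/finite_set_countable/finite_image.
split=> [_ [n _ [c _ <-]]|x V]; first exact: metric_ball_open.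
rewrite nbhsE => -[A [/d_open A_open Ax] AV].
have [e [e_gt0 ballA]] := A_open x Ax.
have [n lt_e] : exists n, (/2) ^ n < e / 2 by apply: half_pow_lt; lra.
have [c c_net dcx] := netP n x.
exists (ball n c); first by split=> //; exists n => //; exists c.
move=> y dcy; apply/AV/ballA; rewrite /ball /= in dcy *.
have := d_tri x c y; rewrite (d_sym x c); lra.
Qed.

End compact_metric.

Definition pointed_at (T : topologicalType) (x : T) : Type := T.
HB.instance Definition _ (T : topologicalType) (x : T) :=
  Topological.copy (pointed_at x) T.
HB.instance Definition _ (T : topologicalType) (x : T) :=
  isPointed.Build (pointed_at x) x.

Lemma compact_metrizable_countable_clopen (T : topologicalType) :
  compact [set: T] -> metrizable_space T ->
  countable [set A : set T | clopen A].
Proof.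
move=> T_compact [d d_metric].
have [[x _]|T0] := pselect (exists x : T, True); last first.
  apply/countable_injP; exists (fun=> 0%nat) => A B _ _ _.
  by apply/seteqP; split=> y; case: T0; exists y.
exact (@clopen_countable (pointed_at x) T_compact
  (@compact_metric_second_countable (pointed_at x) d d_metric T_compact)).
Qed.

Section clopen_ultrametric.
Variables (T : topologicalType) (g : nat -> set T).
Hypotheses (g_clopen : forall n, clopen (g n))
  (g_base : forall (U : set T) x,
     open U -> U x -> exists2 n, g n x & g n `<=` U)
  (T_hausdorff : hausdorff_space T).

Definition separates n x y := (x \in g n) != (y \in g n).

Lemma separatesC n x y : separates n x y = separates n y x.
Proof. by rewrite /separates eq_sym. Qed.

Lemma separates_split n x y z :
  separates n x z -> separates n x y || separates n y z.
Proof.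
by rewrite /separates; case: (x \in g n); case: (y \in g n); case: (z \in g n).
Qed.

Lemma separates_neq x y : x != y -> exists n, separates n x y.
Proof.
move=> /(hausdorff_accessible T_hausdorff)[U [U_open /set_mem Ux /set_mem nUy]].
have [n gnx gnU] := g_base U_open Ux.
by exists n; rewrite /separates (mem_set gnx) memNset // => /gnU.
Qed.

Lemma open_unseparated n x : open [set y | ~~ separates n x y].
Proof.
have [g_open g_closed] := g_clopen n.
rewrite /separates; case: (boolP (x \in g n)) => _.
  suff -> : [set y | ~~ (true != (y \in g n))] = g n by [].
  by apply/seteqP; split=> y; rewrite /= negbK eq_sym eqb_id in_setE.
suff -> : [set y | ~~ (false != (y \in g n))] = ~` g n by exact: closed_openC.
by apply/seteqP; split=> y; rewrite /= negbK eq_sym eqbF_neg notin_setE.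
Qed.

Definition ultra_dist x y : R :=
  if pselect (exists n, separates n x y) is left ex then (/2) ^ ex_minn ex
  else 0.

Variant ultra_dist_spec x y : R -> Prop :=
  | UltraDist0 of (forall n, ~~ separates n x y) : ultra_dist_spec x y 0
  | UltraDistPow n of separates n x y
      & (forall k, (k < n)%nat -> ~~ separates k x y) :
      ultra_dist_spec x y ((/2) ^ n).

Lemma ultra_distP x y : ultra_dist_spec x y (ultra_dist x y).
Proof.
rewrite /ultra_dist; case: pselect => [ex|nex].
  case: ex_minnP => n sep_n min_n; apply: UltraDistPow => // k lt_kn.
  by apply: contraTN lt_kn => /min_n; rewrite -leqNgt.
by apply: UltraDist0 => n; apply/negP => sep_n; apply: nex; exists n.
Qed.

Lemma ultra_dist_ge0 x y : 0 <= ultra_dist x y.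
Proof. by case: ultra_distP => [_|n _ _]; [lra|apply/Rlt_le/half_pow_gt0]. Qed.

Lemma ultra_dist_ltP x y m :
  ultra_dist x y < (/2) ^ m <-> forall k, (k <= m)%nat -> ~~ separates k x y.
Proof.
case: ultra_distP => [nsep|n sep_n min_n].
  by split=> // _; exact: half_pow_gt0.
rewrite half_pow_ltE; split=> [lt_mn k le_km|nsep].
  by apply: min_n; exact: leq_ltn_trans le_km lt_mn.
by rewrite ltnNge; apply: contraL sep_n; exact: nsep.
Qed.

Lemma ultra_dist_ge n x y : separates n x y -> (/2) ^ n <= ultra_dist x y.
Proof.
move=> sep_n; apply: Rnot_lt_le.
by move=> /ultra_dist_ltP/(_ n (leqnn n)); rewrite sep_n.
Qed.

Lemma ultra_distC x y : ultra_dist x y = ultra_dist y x.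
Proof.
case: (ultra_distP x y) => [nxy|n sxy min_xy];
  case: (ultra_distP y x) => [nyx|m syx min_yx] //.
- by move: (nxy m); rewrite separatesC syx.
- by move: (nyx n); rewrite separatesC sxy.
have [lt_nm|lt_mn|-> //] := ltngtP n m.
  by move: (min_yx n lt_nm); rewrite separatesC sxy.
by move: (min_xy m lt_mn); rewrite separatesC syx.
Qed.

Lemma ultra_dist_eq0 x y : ultra_dist x y = 0 <-> x = y.
Proof.
split=> [dxy0|<-]; last by case: ultra_distP => // n; rewrite /separates eqxx.
apply: contrapT => /eqP/separates_neq[n /ultra_dist_ge].
by have := half_pow_gt0 n; lra.
Qed.

Lemma ultra_dist_triangle x y z :
  ultra_dist x z <= ultra_dist x y + ultra_dist y z.
Proof.
have := ultra_dist_ge0 x y; have := ultra_dist_ge0 y z.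
case: (ultra_distP x z) => [_|n sep_n _]; first lra.
by case/orP: (separates_split y sep_n) => /ultra_dist_ge; lra.
Qed.

Lemma open_ultra_ball x m : open [set y | ultra_dist x y < (/2) ^ m].
Proof.
rewrite openE => y /ultra_dist_ltP agree_xy.
have near_agree : \forall z \near y, forall k : 'I_m.+1, ~~ separates k x z.
  apply: filter_forall => k; apply: open_nbhs_nbhs.
  by split; [exact: open_unseparated|exact: agree_xy (ltn_ord k)].
rewrite /interior; apply: filterS near_agree => z agree_xz.
by apply/ultra_dist_ltP => k le_km; exact: (agree_xz (@Ordinal m.+1 k le_km)).
Qed.

Lemma ultra_dist_metric : is_metric_for ultra_dist.
Proof.
split; first exact: ultra_dist_ge0.
split; first exact: ultra_dist_eq0.
split; first exact: ultra_distC.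
split; first exact: ultra_dist_triangle.
move=> A; split=> [A_open x Ax|A_balls].
  have [n gnx gnA] := g_base A_open Ax.
  exists ((/2) ^ n); split=> [|y /ultra_dist_ltP/(_ n (leqnn n))].
    exact: half_pow_gt0.
  by rewrite /separates (mem_set gnx) negbK eq_sym eqb_id in_setE => /gnA.
rewrite openE => x Ax; have [e [e_gt0 ballA]] := A_balls x Ax.
have [m lt_e] := half_pow_lt e_gt0.
apply: (@filterS _ _ _ [set y | ultra_dist x y < (/2) ^ m]) => [y /= dxy|].
  by apply: ballA => /=; lra.
apply: open_nbhs_nbhs; split; first exact: open_ultra_ball.
by rewrite /= (proj2 (ultra_dist_eq0 x x) erefl); exact: half_pow_gt0.
Qed.

End clopen_ultrametric.

Lemma countable_clopen_metrizable (T : topologicalType) :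
  hausdorff_space T -> clopen_base_space T ->
  countable [set A : set T | clopen A] -> metrizable_space T.
Proof.
move=> T_hausdorff T_base.
case/pfcard_geP=> [/seteqP[/(_ _ clopen0)//]|/surjfunPex[g clopenE]].
have g_clopen n : clopen (g n).
  by have : [set A : set T | clopen A] (g n) by rewrite clopenE; exists n.
have g_base U x : open U -> U x -> exists2 n, g n x & g n `<=` U.
  move=> U_open Ux; have [V [V_clopen [Vx VU]]] := T_base U x U_open Ux.
  have : [set A : set T | clopen A] V := V_clopen.
  by rewrite clopenE => -[n _ gnV]; exists n; rewrite gnV.
by exists (ultra_dist g); exact: ultra_dist_metric.
Qed.

Definition clopen_nbhs (K : topologicalType) (x : K) : set (set K) :=
  [set A | clopen A /\ A x].

Definition clopen_quotient (K : topologicalType) :=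
  {p : set (set K) | exists x, p = clopen_nbhs x}.

HB.instance Definition _ (K : topologicalType) :=
  gen_eqMixin (clopen_quotient K).
HB.instance Definition _ (K : topologicalType) :=
  gen_choiceMixin (clopen_quotient K).

Definition clopen_class (K : topologicalType) (x : K) : clopen_quotient K :=
  exist _ (clopen_nbhs x) (ex_intro _ x erefl).
Arguments clopen_class {K}.

(* The topology generated by the images of clopen sets; it is coarser than the
   quotient topology and zero-dimensional by construction. *)
Definition quotient_open (K : topologicalType) (U : set (clopen_quotient K)) :=
  forall x, U (clopen_class x) ->
    exists A, [/\ clopen A, A x & forall y, A y -> U (clopen_class y)].

Lemma quotient_openT (K : topologicalType) :
  quotient_open [set: clopen_quotient K].
Proof. by move=> x _; exists setT; split=> //; exact: clopenT. Qed.

Lemma quotient_openI (K : topologicalType) : setI_closed (@quotient_open K).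
Proof.
move=> U V U_open V_open x [/U_open[A [A_clopen Ax AU]]].
move=> /V_open[B [B_clopen Bx BV]].
exists (A `&` B); split=> //; first exact: clopenI.
by move=> y [Ay By]; split; [exact: AU|exact: BV].
Qed.

Lemma quotient_openU (K : topologicalType) (I : Type)
    (f : I -> set (clopen_quotient K)) :
  (forall i, quotient_open (f i)) -> quotient_open (\bigcup_i f i).
Proof.
move=> f_open x [i _ /f_open[A [A_clopen Ax Af]]].
by exists A; split=> // y /Af; exists i.
Qed.

HB.instance Definition _ (K : topologicalType) :=
  isOpenTopological.Build (clopen_quotient K)
    (@quotient_openT K) (@quotient_openI K) (@quotient_openU K).

Section clopen_quotient_theory.
Variable K : topologicalType.
Implicit Types (A : set K) (x y : K).

Lemma clopen_quotient_openP (U : set (clopen_quotient K)) :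
  open U <-> quotient_open U.
Proof. by []. Qed.

Lemma clopen_class_surj (q : clopen_quotient K) : exists x, clopen_class x = q.
Proof. by case: q => p [x eq_p]; exists x; apply: eq_exist. Qed.

Lemma clopen_class_saturated A x y :
  clopen A -> clopen_class x = clopen_class y -> A x -> A y.
Proof.
move=> A_clopen /(congr1 (fun q => proj1_sig q A)) /= eq_xy Ax.
by have [] : clopen_nbhs y A by rewrite -eq_xy.
Qed.

Lemma mem_clopen_class_image A x :
  clopen A -> (clopen_class @` A) (clopen_class x) = A x.
Proof.
move=> A_clopen; rewrite propeqE; split=> [[y Ay eq_yx]|Ax]; last by exists x.
exact: clopen_class_saturated eq_yx Ay.
Qed.

Lemma clopen_class_imageK A :
  clopen A -> clopen_class @^-1` (clopen_class @` A) = A.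
Proof.
move=> A_clopen; rewrite predeqE => x.
by rewrite -(mem_clopen_class_image x A_clopen).
Qed.

Lemma clopen_class_image_clopen A : clopen A -> clopen (clopen_class @` A).
Proof.
have image_open (B : set K) : clopen B -> open (clopen_class @` B).
  move=> B_clopen; apply/clopen_quotient_openP => x.
  rewrite mem_clopen_class_image // => Bx.
  by exists B; split=> // y By; exists y.
move=> A_clopen; split; first exact: image_open.
have CA_clopen : clopen (~` A) by exact: clopenC.
rewrite -openC (_ : ~` _ = clopen_class @` (~` A)); first exact: image_open.
apply/seteqP; split=> q; have [x <-] := clopen_class_surj q.
  rewrite mem_clopen_class_image // => nAx Ax.
  by apply: nAx; rewrite mem_clopen_class_image.
rewrite mem_clopen_class_image // => nAx imA.
by apply: nAx; move: imA; rewrite mem_clopen_class_image.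
Qed.

Lemma continuous_clopen_class : continuous (@clopen_class K).
Proof.
apply/continuousP => U /clopen_quotient_openP U_open; rewrite openE.
move=> x /U_open[A [[A_open _] Ax AU]].
exact: filterS AU (open_nbhs_nbhs (conj A_open Ax)).
Qed.

Lemma clopen_quotient_base : clopen_base_space (clopen_quotient K).
Proof.
move=> U q /clopen_quotient_openP U_open Uq.
have [x eq_q] := clopen_class_surj q; subst q.
have [A [A_clopen Ax AU]] := U_open x Uq.
exists (clopen_class @` A); split; first exact: clopen_class_image_clopen.
by split; [exists x|move=> _ [y Ay <-]; exact: AU].
Qed.

Lemma clopen_quotient_zero_dimensional : zero_dimensional (clopen_quotient K).
Proof.
move=> q1 q2; have [x <-] := clopen_class_surj q1.
have [y <-] := clopen_class_surj q2; move=> /eqP neq_xy.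
have [A [A_clopen Ax nAy]] : exists A, [/\ clopen A, A x & ~ A y].
  apply: contrapT => nsep; apply: neq_xy; apply: eq_exist.
  apply/seteqP; split=> A [A_clopen Az]; split=> //; apply: contrapT => nA.
  - by apply: nsep; exists A.
  - by apply: nsep; exists (~` A); split=> //; exact: clopenC.
exists (clopen_class @` A); split; first exact: clopen_class_image_clopen.
  by exists x.
by rewrite mem_clopen_class_image.
Qed.

End clopen_quotient_theory.

Theorem lemma7p1 (K : topologicalType) (hK : hausdorff_space K)
    (cK : compact [set: K]) :
  (forall (L : topologicalType) (f : K -> L),
      hausdorff_space L -> continuous f -> (forall y : L, exists x : K, f x = y) ->
      clopen_base_space L -> metrizable_space L)
  <-> countable [set A : set K | clopen A].
Proof.
split=> [metrizable_images|K_countable L f L_hausdorff f_cont f_surj L_base].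
  have Q_surj := @clopen_class_surj K.
  have Q_metrizable := metrizable_images _ _
    (zero_dimensional_hausdorff (@clopen_quotient_zero_dimensional K))
    (@continuous_clopen_class K) Q_surj (@clopen_quotient_base K).
  have Q_compact :=
    compact_continuous_surj (@continuous_clopen_class K) Q_surj cK.
  apply: (inj_countable (F := image^~ clopen_class)); last first.
    exact: compact_metrizable_countable_clopen Q_compact Q_metrizable.
  - by move=> A /clopen_class_image_clopen.
  - move=> A B /set_mem A_clopen /set_mem B_clopen eqAB.
    by rewrite -(clopen_class_imageK A_clopen) eqAB clopen_class_imageK.
apply: countable_clopen_metrizable => //.
apply: (inj_countable (F := preimage f)) K_countable.
- by move=> B1 B2 _ _; exact: preimage_surj_inj.
- by move=> B B_clopen; exact: preimage_clopen.
Qed.
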